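(* Let $t\ge2$ and $n\ge1$ be integers and let $\lambda$ be a $t$-core of length at most $tn+1$. Then \[\mathrm{rk}(\lambda)=(n_0(\lambda)-n-1)_++\sum_{i=1}^{t-1}(n_i(\lambda)-n)_+ ,\] where $m_+=\max(m,0)$.
   Context: A $t$-core is a partition with no hook length divisible by $t$. $\mathrm{rk}(\lambda)$ (Frobenius rank) is the largest $j$ with $\lambda_j\ge j$. The beta-set of $\lambda$ is $\beta_i(\lambda)=\lambda_i+tn+1-i$ for $1\le i\le tn+1$, and $n_i(\lambda)$ is the number of $\beta_j(\lambda)$ congruent to $i$ modulo $t$, $0\le i\le t-1$. *)

From mathcomp Require Import all_boot.
Set Implicit Arguments. Unset Strict Implicit. Unset Printing Implicit Defensive.

(* A partition is a seq nat, weakly decreasing, with all parts positive.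
   lam_i (1-indexed) := nth 0 lam (i-1), so lam_i = 0 beyond the length. *)
Definition is_partition (la : seq nat) : bool :=
  sorted geq la && all (fun x => 0 < x) la.

Definition part (la : seq nat) (i : nat) : nat := nth 0 la i.-1.

Definition conj_part (la : seq nat) (j : nat) : nat := count (fun x => j <= x) la.

Definition hook (la : seq nat) (i j : nat) : nat :=
  (part la i - j) + (conj_part la j - i) + 1.

Definition is_cell (la : seq nat) (i j : nat) : bool :=
  (1 <= i <= size la) && (1 <= j <= part la i).

Definition is_core (t : nat) (la : seq nat) : Prop :=
  forall i j, is_cell la i j -> ~~ (t %| hook la i j).

Definition frob_rank (la : seq nat) : nat :=
  \max_(j < (size la).+1 | j <= part la j) j.

(* beta_i = lam_i + t*n + 1 - i for 1 <= i <= t*n+1 (never negative) *)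
Definition beta (t n : nat) (la : seq nat) (i : nat) : nat :=
  part la i + t * n + 1 - i.

Definition nres (t n : nat) (la : seq nat) (r : nat) : nat :=
  #|[set i : 'I_(t * n + 1) | beta t n la i.+1 %% t == r]|.

From mathcomp Require Import all_boot zify.

Set Implicit Arguments.
Unset Strict Implicit.
Unset Printing Implicit Defensive.

(* With N = tn+1, the beta-set B = {b_1 > ... > b_N} of the partition is placed on
   an abacus with t runners.  If c = b_i - t is not in B, then row i has a cell of
   hook length t (the column is read off from the number of beta-numbers above c);
   so for a t-core B is closed under b |-> b - t, and runner r carries exactly the
   beads r, r + t, ..., r + (n_r - 1) t.  Since b_i >= N iff lambda_i >= i, the rank
   counts the beads at positions >= tn+1, i.e. the beads of runner r at level
   k >= n + [r = 0]; there are (n_r - n - [r = 0])_+ of them. *)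

Lemma count_iota_ltn K m : count (fun i => i < K) (iota 0 m) = minn K m.
Proof.
elim: m => [|m IHm]; first by rewrite minn0.
by rewrite -addn1 iotaD count_cat IHm /= addn0; case: (ltnP m K) => ?; lia.
Qed.

Lemma count_iota_geq K m : count (leq K) (iota 0 m) = m - K.
Proof.
elim: m => [|m IHm] //.
by rewrite -addn1 iotaD count_cat IHm /= addn0; case: (leqP K m) => ?; lia.
Qed.

Lemma card_ord_count N (P : pred nat) : #|[set i : 'I_N | P i]| = count P (iota 0 N).
Proof.
by rewrite cardsE -sum1_card -sum1_count -val_enum_ord big_map big_enum_cond.
Qed.

Lemma count_sum_modn t (a : pred nat) s : 0 < t ->
  count a s = \sum_(r < t) count (fun b => (b %% t == r) && a b) s.
Proof.
move=> t_gt0; elim: s => [|b s IHs] /=; first by rewrite big1.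
rewrite big_split /= -IHs; congr (_ + _).
rewrite (bigD1 (Ordinal (ltn_pmod b t_gt0))) //= eqxx big1 ?addn0 // => r.
by rewrite -val_eqE /= eq_sym => /negbTE ->.
Qed.

Lemma count_progression_geq t n r m : r < t ->
  count (fun k => t * n + 1 <= r + k * t) (iota 0 m) = m - (n + (r == 0)).
Proof.
move=> lt_r_t; rewrite -count_iota_geq; apply: eq_count => k /=.
case: r lt_r_t => [|r] lt_r_t /=.
  by rewrite add0n !addn1 [k * t]mulnC ltn_pmul2l //; lia.
rewrite addn0; case: (leqP n k) => [le_n_k | lt_k_n].
  by have := leq_mul le_n_k (leqnn t); lia.
by have := leq_mul lt_k_n (leqnn t); rewrite mulSn; lia.
Qed.

Section ResidueClasses.

Variables (t : nat) (s : seq nat).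
Hypothesis s_subn_closed : forall b, b \in s -> t <= b -> b - t \in s.

Lemma mem_subn_mul k b : b \in s -> k * t <= b -> b - k * t \in s.
Proof.
move=> s_b; elim: k => [|k IHk] le_kt_b; first by rewrite subn0.
by rewrite mulSnr subnDA; apply: s_subn_closed; [apply: IHk | ]; lia.
Qed.

Hypotheses (t_gt0 : 0 < t) (s_uniq : uniq s).

Lemma perm_filter_modn r : r < t ->
  perm_eq [seq b <- s | b %% t == r]
          [seq r + k * t | k <- iota 0 (count (fun b => b %% t == r) s)].
Proof.
move=> lt_r_t; set f := filter _ s.
have progression_inj : injective (fun k => r + k * t).
  by move=> k1 k2 /addnI /eqP; rewrite eqn_pmul2r // => /eqP.
have progression_uniq m : uniq [seq r + k * t | k <- iota 0 m].
  by rewrite map_inj_uniq ?iota_uniq.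
have progression_mod k : (r + k * t) %% t = r by rewrite addnC modnMDl modn_small.
have f_progression b k : b \in f -> k <= b %/ t -> r + k * t \in f.
  rewrite !mem_filter => /andP[/eqP b_r s_b] le_k.
  rewrite progression_mod eqxx /=.
  have b_eq : b = b %/ t * t + r by rewrite {1}(divn_eq b t) b_r.
  have le_kt : k * t <= b %/ t * t by rewrite leq_mul2r le_k orbT.
  have -> : r + k * t = b - (b %/ t - k) * t by rewrite {1}b_eq mulnBl; lia.
  by apply: mem_subn_mul => //; rewrite mulnBl; lia.
have f_sub : {subset f <= [seq r + k * t | k <- iota 0 (size f)]}.
  move=> b f_b; have := f_b; rewrite mem_filter => /andP[/eqP b_r _].
  rewrite (divn_eq b t) b_r addnC; apply: map_f; rewrite mem_iota add0n /=.
  rewrite -[X in X <= _](size_iota 0) -(size_map (fun k => r + k * t)).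
  apply: (uniq_leq_size (progression_uniq _)) => x /mapP[k].
  by rewrite mem_iota => /andP[_ lt_k] ->; apply: f_progression f_b _.
rewrite -size_filter -/f; apply: uniq_perm (filter_uniq _ s_uniq) (progression_uniq _) _.
by have [] := uniq_min_size (filter_uniq _ s_uniq) f_sub; rewrite ?size_map ?size_iota.
Qed.

Lemma count_modn_closed r (Q : pred nat) : r < t ->
  count (fun b => (b %% t == r) && Q b) s =
  count (fun k => Q (r + k * t)) (iota 0 (count (fun b => b %% t == r) s)).
Proof.
move=> lt_r_t; rewrite -(count_map (fun k => r + k * t)).
rewrite -(permP (perm_filter_modn lt_r_t)) count_filter.
by apply: eq_count => b /=; rewrite andbC.
Qed.

End ResidueClasses.

Lemma part_default la i : size la < i -> part la i = 0.
Proof. by move=> lt_la_i; rewrite /part nth_default //; lia. Qed.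

Section Partitions.

Variable la : seq nat.
Hypothesis la_partition : is_partition la.

Lemma leq_part i j : 1 <= i <= j -> part la j <= part la i.
Proof.
move: la_partition => /andP[la_sorted _] /andP[i_gt0 le_ij].
case: (ltnP j.-1 (size la)) => [lt_j_la | ?]; last by rewrite /part nth_default.
apply: (sorted_leq_nth (rev_trans leq_trans) leqnn 0 la_sorted); rewrite ?inE //; lia.
Qed.

Lemma conj_part_eq j m : part la m.+1 < j <= part la m -> conj_part la j = m.
Proof.
move=> /andP[lt_j le_j]; rewrite /conj_part -(mkseq_nth 0 la) count_map.
rewrite (eq_count (a2 := fun i => i < m)) ?count_iota_ltn => [|i].
  by have := @part_default la m; lia.
case: (ltnP i m) => le_im /=; rewrite -[nth 0 la i]/(part la i.+1).
  by have := @leq_part i.+1 m; lia.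
by have := @leq_part m.+1 i.+1; lia.
Qed.

Lemma frob_rank_count N : size la <= N ->
  frob_rank la = count (fun i => i < part la i.+1) (iota 0 N).
Proof.
move=> le_la_N; set R := frob_rank la.
have [le_R_part le_R_la] : R <= part la R /\ R <= size la.
  apply: (big_ind (fun m => m <= part la m /\ m <= size la)) => //.
    by move=> x y ? ?; rewrite /maxn; case: ifP.
  by move=> j le_j; split; rewrite // -ltnS.
rewrite (eq_count (a2 := fun i => i < R)) ?count_iota_ltn => [|i]; first by lia.
apply/idP/idP => [lt_i_part | lt_i_R].
  have lt_i_la : i.+1 < (size la).+1 by have := @part_default la i.+1; lia.
  exact: leq_bigmax_cond (Ordinal lt_i_la) lt_i_part.
by have := @leq_part i.+1 R; lia.
Qed.

End Partitions.

Definition beta_num (N : nat) (la : seq nat) (i : nat) : nat := part la i + N - i.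

Definition beta_set (N : nat) (la : seq nat) : seq nat :=
  [seq beta_num N la i.+1 | i <- iota 0 N].

Section BetaSet.

Variables (N : nat) (la : seq nat).

Lemma beta_num_boundary c : exists2 m, m <= N &
  (forall l, 1 <= l <= m -> c < beta_num N la l) /\
  (m < N -> beta_num N la m.+1 <= c).
Proof.
set m := find (fun l => beta_num N la l.+1 <= c) (iota 0 N).
have le_m_N : m <= N by rewrite -[X in _ <= X](size_iota 0 N) find_size.
exists m => //; split=> [l /andP[l_gt0 le_l_m] | lt_m_N].
  have lt_l_m : l.-1 < m by rewrite prednK.
  have := before_find 0 lt_l_m; rewrite nth_iota ?add0n ?prednK //; last by lia.
  by move/negbT; rewrite -ltnNge.
have has_m : has (fun l => beta_num N la l.+1 <= c) (iota 0 N).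
  by rewrite has_find size_iota.
by have := nth_find 0 has_m; rewrite -/m nth_iota.
Qed.

Hypothesis la_partition : is_partition la.

Lemma beta_set_uniq : uniq (beta_set N la).
Proof.
rewrite map_inj_in_uniq ?iota_uniq // => i k; rewrite !mem_iota /beta_num /=.
case: (ltngtP i k) => // [lt_ik | lt_ki].
  by have := @leq_part la la_partition i.+1 k.+1; lia.
by have := @leq_part la la_partition k.+1 i.+1; lia.
Qed.

Hypothesis size_la : size la <= N.

Lemma count_beta_set_geq : count (leq N) (beta_set N la) = frob_rank la.
Proof.
rewrite (frob_rank_count la_partition size_la) count_map.
by apply: eq_in_count => i; rewrite mem_iota /= /beta_num; lia.
Qed.

Lemma beta_gap_hook i c : 1 <= i <= N -> c < beta_num N la i ->
  c \notin beta_set N la -> exists2 j, is_cell la i j & hook la i j = beta_num N la i - c.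
Proof.
move=> /andP[i_gt0 le_i_N] lt_c_bi c_gap.
have [m le_m_N [above below]] := beta_num_boundary c.
have {}below : m < N -> beta_num N la m.+1 < c.
  move=> lt_m_N; rewrite ltn_neqAle below // andbT.
  by apply: contraNneq c_gap => <-; apply: map_f; rewrite mem_iota.
have le_i_m : i <= m.
  rewrite leqNgt; apply/negP => lt_m_i.
  have := below (leq_trans lt_m_i le_i_N); move: lt_c_bi.
  by have := @leq_part la la_partition m.+1 i; rewrite /beta_num; lia.
(* Exactly m beta-numbers exceed c, so column j has m cells and the hook of (i, j) is b_i - c. *)
pose j := c + m.+1 - N.
have col_j : part la m.+1 < j <= part la m.
  by move: below (above m); have := @part_default la m.+1; rewrite /j /beta_num; lia.
have row_m := @part_default la m; have part_i := @leq_part la la_partition i m.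
exists j; first by rewrite /is_cell; lia.
by rewrite /hook (conj_part_eq la_partition col_j) /beta_num; lia.
Qed.

Lemma core_beta_set_subn_closed t b : 0 < t -> is_core t la ->
  b \in beta_set N la -> t <= b -> b - t \in beta_set N la.
Proof.
move=> t_gt0 la_core /mapP[i]; rewrite mem_iota => /andP[_ lt_i_N] -> le_t_b.
apply: contraT => gap; have lt_i1_N : 1 <= i.+1 <= N by lia.
have [|j cell_ij hook_t] := beta_gap_hook lt_i1_N _ gap; first by lia.
by have := la_core _ _ cell_ij; rewrite hook_t subKn // dvdnn.
Qed.

End BetaSet.

Lemma nres_beta_set t n la r :
  nres t n la r = count (fun b => b %% t == r) (beta_set (t * n + 1) la).
Proof.
rewrite /nres (card_ord_count _ (fun i => beta t n la i.+1 %% t == r)) count_map.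
by apply: eq_count => i; rewrite /= /beta_num addnA.
Qed.

Unset Implicit Arguments.

Theorem lemma3p2 (t n : nat) (la : seq nat) :
  2 <= t -> 1 <= n ->
  is_partition la -> is_core t la -> size la <= t * n + 1 ->
  frob_rank la = (nres t n la 0 - n - 1) + \sum_(1 <= i < t) (nres t n la i - n).
Proof.
move=> t_gt1 _ la_partition la_core size_la; have t_gt0 : 0 < t by lia.
have closed := core_beta_set_subn_closed la_partition size_la t_gt0 la_core.
have runner (r : 'I_t) : count (fun b => (b %% t == r) && (t * n + 1 <= b))
    (beta_set (t * n + 1) la) = nres t n la r - (n + (r == 0 :> nat)).
  rewrite (count_modn_closed closed t_gt0 (beta_set_uniq _ la_partition)) //.
  by rewrite -nres_beta_set count_progression_geq.
rewrite -(count_beta_set_geq la_partition size_la) (count_sum_modn _ _ t_gt0).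
rewrite (eq_bigr _ (fun r _ => runner r)).
rewrite -(big_mkord xpredT (fun r => nres t n la r - (n + (r == 0)))) big_ltn //.
rewrite subnDA; congr (_ + _); apply: eq_big_nat => r /andP[r_gt0 _].
by rewrite eqn0Ngt r_gt0 addn0.
Qed.
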